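(* Let $\mathcal{X}_{k|k-1}\subset\mathbb{R}^n$ and $\mathcal{V}_k\subset\mathbb{R}^r$ be constrained zonotopes and $y_k\in\mathbb{R}^m$. Let $h:\mathbb{R}^n\times\mathbb{R}^r\to\mathbb{R}^m$ and write it as $\varrho^{\rm h}:\mathbb{R}^{n+r}\to\mathbb{R}^m$, $\varrho^{\rm h}(z)=h(x,v)$ for $z=[x^\top\ v^\top]^\top$. Let $\mathcal{Z}_k=\mathcal{X}_{k|k-1}\times\mathcal{V}_k$, let $\mathcal{P}_k\supseteq\mathcal{Z}_k$ be a convex polytope, and suppose $\varrho^{\rm h}=\varrho^{\rm ha}-\varrho^{\rm hb}$ on $\mathcal{P}_k$ where $\varrho^{\rm ha},\varrho^{\rm hb}$ are differentiable and componentwise convex on $\mathcal{P}_k$. Let $\bar z\in\mathcal{P}_k$, let $H=\nabla_z\varrho^{\rm h}(\bar z)=[H^{\rm x}\ H^{\rm v}]$ with $H^{\rm x}=\nabla_x\varrho^{\rm h}(\bar z)$, $H^{\rm v}=\nabla_v\varrho^{\rm h}(\bar z)$, and define $\bar\varrho(z)=\varrho^{\rm h}(\bar z)+H(z-\bar z)$, $\bar\varrho^{\rm a}(z)=\varrho^{\rm ha}(\bar z)+\nabla_z\varrho^{\rm ha}(\bar z)(z-\bar z)$, $\bar\varrho^{\rm b}(z)=\varrho^{\rm hb}(\bar z)+\nabla_z\varrho^{\rm hb}(\bar z)(z-\bar z)$. For $i=1,\ldots,m$ let $$e^-_i=\min_{z\in\mathrm{vert}(\mathcal{P}_k)}\big(\bar\varrho^{\rm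 a}_i(z)-\varrho^{\rm hb}_i(z)-\bar\varrho_i(z)\big),\qquad e^+_i=\max_{z\in\mathrm{vert}(\mathcal{P}_k)}\big(\varrho^{\rm ha}_i(z)-\bar\varrho^{\rm b}_i(z)-\bar\varrho_i(z)\big),$$ and let $\mathcal{R}_k$ be the zonotope $\{\mathrm{diag}(\tfrac12(e^+-e^-)),\tfrac12(e^-+e^+)\}$ (the box $[e^-,e^+]$). Define the constrained zonotope $\mathcal{Y}_k=\big(y_k-\varrho^{\rm h}(\bar z)+H\bar z\big)\oplus(-H^{\rm v}\mathcal{V}_k)\oplus(-\mathcal{R}_k)$. Then $$\{x\in\mathcal{X}_{k|k-1}:\ y_k=h(x,v)\ \text{for some } v\in\mathcal{V}_k\}\subseteq\breve{\mathcal{X}}_k:=\mathcal{X}_{k|k-1}\cap_{H^{\rm x}}\mathcal{Y}_k,$$ and $\breve{\mathcal{X}}_k$ is a constrained zonotope.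
   Context: A constrained zonotope (CZ) is a set $\{G,c,A,b\}=\{G\xi+c:\xi\in[-1,1]^{n_g},\ A\xi=b\}$; a zonotope $\{G,c\}$ has no equality constraints. $\oplus$ is Minkowski sum (vectors treated as singletons), $L\mathcal{X}=\{Lx:x\in\mathcal{X}\}$, $-\mathcal{X}=\{-x:x\in\mathcal{X}\}$, $\times$ is Cartesian product. The generalized intersection is $\mathcal{X}\cap_M\mathcal{W}=\{x\in\mathcal{X}:Mx\in\mathcal{W}\}$. $\mathrm{vert}(\mathcal{P})$ is the vertex set of the polytope $\mathcal{P}$. Vector-valued convexity is componentwise; $\nabla_x$ denotes the Jacobian with respect to the block $x$. *)

From HB Require Import structures.
From mathcomp Require Import all_boot all_order all_algebra.
From mathcomp Require Import all_classical all_reals.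
From mathcomp Require Import topology normedtype derive.
Set Implicit Arguments. Unset Strict Implicit. Unset Printing Implicit Defensive.
Import Order.TTheory GRing.Theory Num.Theory.
Import numFieldNormedType.Exports.
Local Open Scope classical_set_scope.
Local Open Scope ring_scope.

Section Defs.
Variable R : realType.

(* Constrained zonotope {G,c,A,b} (row-vector convention, i.e. the transpose of
   the paper's column convention):  { xi *m G + c : xi in [-1,1]^ng, xi *m A = b } *)
Definition CZset n ng nc (G : 'M[R]_(ng, n)) (c : 'rV[R]_n)
    (A : 'M[R]_(ng, nc)) (b : 'rV[R]_nc) : set 'rV[R]_n :=
  [set x | exists xi : 'rV[R]_ng,
      (forall j, -1 <= xi 0 j <= 1) /\ xi *m A = b /\ x = xi *m G + c].

Definition Zset n ng (G : 'M[R]_(ng, n)) (c : 'rV[R]_n) : set 'rV[R]_n :=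
  CZset G c (0 : 'M[R]_(ng, 0)) 0.

Definition is_CZ n (X : set 'rV[R]_n) : Prop :=
  exists ng nc (G : 'M[R]_(ng, n)) (c : 'rV[R]_n) (A : 'M[R]_(ng, nc)) b,
    X = CZset G c A b.

Definition msum n (X W : set 'rV[R]_n) : set 'rV[R]_n :=
  [set x + w | x in X & w in W].
Definition mx_img n p (L : 'M[R]_(n, p)) (X : set 'rV[R]_n) : set 'rV[R]_p :=
  (fun x => x *m L) @` X.
Definition sneg n (X : set 'rV[R]_n) : set 'rV[R]_n := (fun x => - x) @` X.
Definition cprod n r (X : set 'rV[R]_n) (V : set 'rV[R]_r) : set 'rV[R]_(n + r) :=
  [set z | X (lsubmx z) /\ V (rsubmx z)].
Definition ginter n p (X : set 'rV[R]_n) (M : 'M[R]_(n, p)) (W : set 'rV[R]_p)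
  : set 'rV[R]_n := [set x | X x /\ W (x *m M)].

Definition conv_hull n (S : seq 'rV[R]_n) : set 'rV[R]_n :=
  [set z | exists w : 'I_(size S) -> R, (forall i, 0 <= w i) /\
     \sum_(i < size S) w i = 1 /\ z = \sum_(i < size S) w i *: S`_i].

Definition is_vertex n (P : set 'rV[R]_n) (z : 'rV[R]_n) : Prop :=
  P z /\ forall x y t, P x -> P y -> 0 < t < 1 ->
    z = t *: x + (1 - t) *: y -> x = y.

Definition convex_set n (P : set 'rV[R]_n) : Prop :=
  forall x y t, P x -> P y -> 0 <= t <= 1 -> P (t *: x + (1 - t) *: y).

Definition cw_convex_on n m (P : set 'rV[R]_n) (f : 'rV[R]_n -> 'rV[R]_m) : Prop :=
  forall (i : 'I_m) x y t, P x -> P y -> 0 <= t <= 1 ->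
    f (t *: x + (1 - t) *: y) 0 i <= t * f x 0 i + (1 - t) * f y 0 i.

Definition differentiable_on n m (P : set 'rV[R]_n) (f : 'rV[R]_n -> 'rV[R]_m) :=
  forall z, P z -> differentiable f z.

Definition lin_approx n m (f : 'rV[R]_n -> 'rV[R]_m) (zb z : 'rV[R]_n) : 'rV[R]_m :=
  f zb + (z - zb) *m jacobian f zb.

End Defs.

(* Tangent planes of a convex function lie below it, so on the polytope P the
   linearization error rho - rbar = (rha - rhb) - rbar is bounded below by the
   concave function rbara - rhb - rbar and above by the convex function
   rha - rbarb - rbar.  A convex function on a polytope is bounded by its values
   at the vertices (the polytope is the convex hull of its vertices, and Jensen's
   inequality applies), so the error at z = (x, v) lies in the box Rk = [em, ep].
   If moreover y = h x v, then
     x Hx = (y - rho zb + zb H) - v Hv - (rho z - rbar z),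
   which is a point of Y.  Constrained zonotopes are closed under linear images,
   Minkowski sums and generalized intersections, whence Xb is one. *)

From HB Require Import structures.
From mathcomp Require Import all_boot all_order all_algebra.
From mathcomp Require Import all_classical all_reals.
From mathcomp Require Import topology normedtype derive.
From mathcomp Require Import ring lra.
Import Order.TTheory GRing.Theory Num.Theory.
Import numFieldNormedType.Exports.
Local Open Scope classical_set_scope.
Local Open Scope ring_scope.

Lemma sum_drop (V : zmodType) K (F : 'I_K -> V) j :
  \sum_i (if i == j then 0 else F i) = \sum_i F i - F j.
Proof.
rewrite [in RHS](bigD1 j) //= (bigD1 j) //= eqxx add0r (addrC (F j)) addrK.
by apply: eq_bigr => i /negbTE ->.
Qed.

Section ConvexCombination.
Context {R : realType} {V : lmodType R} {K : nat}.
Implicit Types (w : 'I_K -> R) (p : 'I_K -> V).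

Lemma comb_drop w p j :
  \sum_i (if i == j then 0 else w i) *: p i = \sum_i w i *: p i - w j *: p j.
Proof. by rewrite -sum_drop; apply: eq_bigr => i _; case: eqP; rewrite ?scale0r. Qed.

Lemma weight_le1 {w} j :
  (forall i, 0 <= w i) -> \sum_i w i = 1 -> w j <= 1.
Proof. by move=> w0 <-; rewrite (bigD1 j) //= lerDl sumr_ge0. Qed.

Lemma comb_weight1 {w} p {j} :
  (forall i, 0 <= w i) -> \sum_i w i = 1 -> w j = 1 -> \sum_i w i *: p i = p j.
Proof.
move=> w0 w1 wj.
have : \sum_(i | i != j) w i = 0 by move: w1; rewrite (bigD1 j) //= wj; lra.
move/psumr_eq0P => /(_ (fun i _ => w0 i)) wi0.
by rewrite (bigD1 j) //= wj scale1r big1 ?addr0 // => i /wi0 ->; rewrite scale0r.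
Qed.

Lemma comb_mix w1 w2 p t :
  \sum_i (t * w1 i + (1 - t) * w2 i) *: p i =
  t *: \sum_i w1 i *: p i + (1 - t) *: \sum_i w2 i *: p i.
Proof.
rewrite !scaler_sumr -big_split /=.
by apply: eq_bigr => i _; rewrite !scalerA -scalerDl.
Qed.

End ConvexCombination.

Definition convex_fun_on {R : realType} {N} (P : set 'rV[R]_N) (g : 'rV[R]_N -> R) :=
  forall x y t, P x -> P y -> 0 <= t <= 1 ->
    g (t *: x + (1 - t) *: y) <= t * g x + (1 - t) * g y.

Section ConvexHull.
Context {R : realType} {N K : nat} (p : 'I_K -> 'rV[R]_N).
Implicit Types (I J : {set 'I_K}) (w : 'I_K -> R).

Definition convex_weights I w :=
  [/\ forall i, 0 <= w i, \sum_i w i = 1 & forall i, i \notin I -> w i = 0].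

Definition hull_on I : set 'rV[R]_N :=
  [set z | exists2 w, convex_weights I w & z = \sum_i w i *: p i].

Local Notation hull := (hull_on [set: 'I_K]%SET).

Lemma convex_weights_mix I w1 w2 t : convex_weights I w1 -> convex_weights I w2 ->
  0 <= t <= 1 -> convex_weights I (fun i => t * w1 i + (1 - t) * w2 i).
Proof.
move=> [w1_ge0 w1_sum w1_supp] [w2_ge0 w2_sum w2_supp] /andP[t0 t1]; split.
- by move=> i; have := w1_ge0 i; have := w2_ge0 i; nra.
- by rewrite big_split /= -!mulr_sumr w1_sum w2_sum; lra.
- by move=> i iI; rewrite w1_supp // w2_supp // !mulr0 addr0.
Qed.

Lemma hull_on_subset {I J} : I \subset J -> hull_on I `<=` hull_on J.
Proof.
move=> IJ z [w [w0 w1 wI] ->]; exists w => //; split => // i iJ.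
by apply: wI; apply: contra iJ; exact: (fintype.subsetP IJ).
Qed.

Lemma hull_point j : hull (p j).
Proof.
exists (fun i => (i == j)%:R); last first.
  by rewrite (bigD1 j) //= eqxx scale1r big1 ?addr0 // => i /negbTE ->; rewrite scale0r.
split=> [i||i]; first by rewrite ler0n.
  by rewrite (bigD1 j) //= eqxx big1 ?addr0 // => i /negbTE ->.
by rewrite inE.
Qed.

Lemma convex_hull : convex_set hull.
Proof.
move=> _ _ t [a aw ->] [b bw ->] t01.
by exists (fun i => t * a i + (1 - t) * b i); [exact: convex_weights_mix | rewrite comb_mix].
Qed.

Lemma comb_split {I w j} : convex_weights I w -> w j < 1 ->
  exists2 z, hull_on (I :\ j) z & \sum_i w i *: p i = w j *: p j + (1 - w j) *: z.
Proof.
move=> [w0 w1 wI] wj1; have wj0 : 0 < 1 - w j by rewrite subr_gt0.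
pose w' i := if i == j then 0 else (1 - w j)^-1 * w i.
exists (\sum_i w' i *: p i).
  exists w' => //; split.
  - by move=> i; rewrite /w'; case: eqP => // _; rewrite mulr_ge0 // invr_ge0 ltW.
  - by rewrite /w' sum_drop -mulr_sumr w1 -mulrBr mulVf ?gt_eqF.
  - move=> i; rewrite !inE negb_and negbK /w'; case: eqP => //= _ /wI ->.
    by rewrite mulr0.
have -> : \sum_i w' i *: p i = (1 - w j)^-1 *: (\sum_i w i *: p i - w j *: p j).
  rewrite -comb_drop scaler_sumr; apply: eq_bigr => i _; rewrite /w'.
  by case: eqP => _; rewrite ?scale0r ?scaler0 // scalerA.
by rewrite scalerA mulfV ?gt_eqF // scale1r addrC subrK.
Qed.

(* Substitute the combination [c] for [p j] in every combination supported on [I]. *)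
Lemma hull_on_drop {I c j} : convex_weights I c -> c j < 1 ->
  p j = \sum_i c i *: p i -> hull_on I `<=` hull_on (I :\ j).
Proof.
move=> [c0 c1 cI] cj1 pjE z [w [w0 w1 wI] ->].
have cj0 : 0 < 1 - c j by rewrite subr_gt0.
pose k := w j / (1 - c j).
have k0 : 0 <= k by rewrite divr_ge0 // ltW.
have kE : w j + k * c j = k by rewrite /k; field; rewrite gt_eqF.
exists (fun i => if i == j then 0 else w i + k * c i); last first.
  rewrite comb_drop kE pjE scaler_sumr -sumrB.
  by apply: eq_bigr => i _; rewrite scalerDl scalerA addrK.
split.
- by move=> i; case: eqP => // _; rewrite addr_ge0 // mulr_ge0.
- by rewrite sum_drop kE big_split /= -mulr_sumr c1 w1 mulr1 addrK.
- move=> i; rewrite !inE negb_and negbK; case: eqP => //= _ iI.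
  by rewrite wI // cI // mulr0 addr0.
Qed.

Lemma non_vertex_comb {I j} : hull `<=` hull_on I -> ~ is_vertex hull (p j) ->
  exists c, [/\ convex_weights I c, c j < 1 & p j = \sum_i c i *: p i].
Proof.
move=> hullI pj_nv.
have [x [y [t [Px Py t01 [pjE xy]]]]] : exists x y t, [/\ hull x, hull y, 0 < t < 1 &
    p j = t *: x + (1 - t) *: y /\ x <> y].
  apply: contra_notP pj_nv => nxy; split; first exact: hull_point.
  move=> x y t Px Py t01 pjE; apply: contrapT => xy; apply: nxy.
  by exists x, y, t.
have [a aw xE] := hullI x Px; have [b bw yE] := hullI y Py.
have /andP[t0 t1] := t01.
exists (fun i => t * a i + (1 - t) * b i); split.
- by apply: convex_weights_mix => //; rewrite !ltW.
- have [a0 a1 _] := aw; have [b0 b1 _] := bw.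
  have aj1 := weight_le1 j a0 a1; have bj1 := weight_le1 j b0 b1.
  rewrite lt_neqAle; apply/andP; split; last by nra.
  apply/eqP => cj1; apply: xy.
  have aj : a j = 1 by nra.
  have bj : b j = 1 by nra.
  by rewrite xE yE (comb_weight1 p a0 a1 aj) (comb_weight1 p b0 b1 bj).
- by rewrite comb_mix -xE -yE.
Qed.

Lemma hull_on_vertices {I} : hull `<=` hull_on I ->
  exists2 I' : {set 'I_K}, {in I', forall i, is_vertex hull (p i)} & hull `<=` hull_on I'.
Proof.
move: {2}#|I| (erefl #|I|) => k; elim: k I => [|k IH] I cardI hullI.
  by exists I => // i; rewrite (cards0_eq cardI) inE.
have [allv|] := pselect {in I, forall i, is_vertex hull (p i)}; first by exists I.
move=> /existsNP[j /not_implyP[jI pj_nv]].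
have [c [cw cj1 pjE]] := non_vertex_comb hullI pj_nv.
apply: (IH (I :\ j)); first by move: cardI; rewrite (cardsD1 j) jI add1n => -[].
exact: subset_trans hullI (hull_on_drop cw cj1 pjE).
Qed.

Lemma convex_le_hull_on (g : 'rV[R]_N -> R) M I :
  convex_fun_on hull g ->
  {in I, forall i, g (p i) <= M} -> hull_on I `<=` [set z | g z <= M].
Proof.
move=> g_cvx; move: {2}#|I| (erefl #|I|) => k.
elim: k I => [|k IH] I cardI gI _ [w ww ->] /=; have [w0 w1 wI] := ww.
  move: w1; rewrite big1 => [/eqP|i _]; first by rewrite eq_sym oner_eq0.
  by rewrite wI // (cards0_eq cardI) inE.
have /card_gt0P[j jI] : (0 < #|I|)%N by rewrite cardI.
have wj1 := weight_le1 j w0 w1.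
have [wj|wj_neq1] := eqVneq (w j) 1; first by rewrite (comb_weight1 p w0 w1 wj) gI.
have wj_lt1 : w j < 1 by rewrite lt_neqAle wj_neq1.
have [z' Iz' ->] := comb_split ww wj_lt1.
have gz' : g z' <= M.
  apply: (IH (I :\ j)) Iz'; first by move: cardI; rewrite (cardsD1 j) jI add1n => -[].
  by move=> i; rewrite inE => /andP[_ /gI].
have hull_z' : hull z' := hull_on_subset (finset.subsetT _) _ Iz'.
apply: le_trans (g_cvx _ _ _ (hull_point j) hull_z' _) _; first by rewrite w0.
have := gI j jI; have := w0 j; nra.
Qed.

Lemma convex_le_vertices (g : 'rV[R]_N -> R) M :
  convex_fun_on hull g -> (forall z, is_vertex hull z -> g z <= M) ->
  hull `<=` [set z | g z <= M].
Proof.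
move=> g_cvx gV; have [I IV hullI] := hull_on_vertices (@subset_refl _ hull).
apply: (subset_trans hullI); apply: convex_le_hull_on g_cvx _ => i /IV; exact: gV.
Qed.

End ConvexHull.

Section Polytope.
Context {R : realType} {N : nat}.

Lemma conv_hull_hull_on (S : seq 'rV[R]_N) :
  conv_hull S = hull_on (fun i : 'I_(size S) => S`_i) [set: 'I_(size S)]%SET.
Proof.
apply/seteqP; split=> z /=.
  by move=> [w [w0 [w1 ->]]]; exists w => //; split=> // i; rewrite inE.
by move=> [w [w0 w1 _] ->]; exists w.
Qed.

Lemma convex_conv_hull (S : seq 'rV[R]_N) : convex_set (conv_hull S).
Proof. by rewrite conv_hull_hull_on; exact: convex_hull. Qed.

Lemma conv_hull_le_vertices {S : seq 'rV[R]_N} {g : 'rV[R]_N -> R} M :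
  convex_fun_on (conv_hull S) g -> (forall z, is_vertex (conv_hull S) z -> g z <= M) ->
  conv_hull S `<=` [set z | g z <= M].
Proof. by rewrite conv_hull_hull_on; exact: convex_le_vertices. Qed.

End Polytope.

Section ConstrainedZonotope.
Context {R : realType}.

Definition unit_cube {k} (xi : 'rV[R]_k) := forall j, -1 <= xi 0 j <= 1.

Lemma unit_cube_row_mx a b (x : 'rV[R]_a) (y : 'rV[R]_b) :
  unit_cube (row_mx x y) <-> unit_cube x /\ unit_cube y.
Proof.
split=> [cube_xy|[cube_x cube_y] j].
  by split=> j; [move: (cube_xy (lshift b j)) | move: (cube_xy (rshift a j))];
    rewrite (row_mxEl, row_mxEr).
by rewrite -(splitK j); case: fintype.split => k /=; rewrite (row_mxEl, row_mxEr).
Qed.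

Lemma is_CZ_set1 n (c : 'rV[R]_n) : is_CZ [set c].
Proof.
exists 0%N, 0%N, 0, c, 0, 0; apply/seteqP; split=> x /=.
  move=> ->; exists 0; split; first by case.
  by split; [apply/rowP => -[] | rewrite mul0mx add0r].
by move=> [xi [_ [_ ->]]]; rewrite mulmx0 add0r.
Qed.

Lemma is_CZ_Zset n ng (G : 'M[R]_(ng, n)) c : is_CZ (Zset G c).
Proof. by exists ng, 0%N, G, c, 0, 0. Qed.

Lemma is_CZ_mx_img n p (L : 'M[R]_(n, p)) X : is_CZ X -> is_CZ (mx_img L X).
Proof.
move=> [ng [nc [G [c [A [b ->]]]]]].
exists ng, nc, (G *m L), (c *m L), A, b; apply/seteqP; split=> x /=.
  move=> [_ [xi [B [E ->]]] <-]; exists xi; split => //; split => //.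
  by rewrite mulmxDl mulmxA.
move=> [xi [B [E ->]]]; exists (xi *m G + c); first by exists xi.
by rewrite mulmxDl mulmxA.
Qed.

Lemma is_CZ_sneg n (X : set 'rV[R]_n) : is_CZ X -> is_CZ (sneg X).
Proof.
move=> [ng [nc [G [c [A [b ->]]]]]].
exists ng, nc, (- G), (- c), A, b; apply/seteqP; split=> x /=.
  move=> [_ [xi [B [E ->]]] <-]; exists xi; split => //; split => //.
  by rewrite mulmxN opprD.
move=> [xi [B [E ->]]]; exists (xi *m G + c); first by exists xi.
by rewrite mulmxN opprD.
Qed.

Lemma is_CZ_msum n (X W : set 'rV[R]_n) : is_CZ X -> is_CZ W -> is_CZ (msum X W).
Proof.
move=> [ng1 [nc1 [G1 [c1 [A1 [b1 ->]]]]]] [ng2 [nc2 [G2 [c2 [A2 [b2 ->]]]]]].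
exists (ng1 + ng2)%N, (nc1 + nc2)%N, (col_mx G1 G2), (c1 + c2), (block_mx A1 0 0 A2),
  (row_mx b1 b2).
apply/seteqP; split=> z /=.
  move=> [_ [xi1 [B1 [E1 ->]]] [_ [xi2 [B2 [E2 ->]]] <-]].
  exists (row_mx xi1 xi2); split; first exact/unit_cube_row_mx.
  rewrite mul_row_block mul_row_col !mulmx0 addr0 add0r E1 E2; split => //.
  by rewrite addrACA.
move=> [xi [B [E ->]]]; rewrite -(hsubmxK xi) in B E *.
move: B E => /unit_cube_row_mx[B1 B2].
rewrite mul_row_block !mulmx0 addr0 add0r => /eq_row_mx[E1 E2].
exists (lsubmx xi *m G1 + c1); first by exists (lsubmx xi).
exists (rsubmx xi *m G2 + c2); first by exists (rsubmx xi).
by rewrite mul_row_col addrACA.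
Qed.

(* The extra constraint block [xi1 G1 M - xi2 G2 = c2 - c1 M] says that the
   image under [M] of the point of [X] is the point of [W]. *)
Lemma is_CZ_ginter n p (X : set 'rV[R]_n) (M : 'M[R]_(n, p)) W :
  is_CZ X -> is_CZ W -> is_CZ (ginter X M W).
Proof.
move=> [ng1 [nc1 [G1 [c1 [A1 [b1 ->]]]]]] [ng2 [nc2 [G2 [c2 [A2 [b2 ->]]]]]].
exists (ng1 + ng2)%N, (nc1 + (nc2 + p))%N, (col_mx G1 0), c1,
  (col_mx (row_mx A1 (row_mx 0 (G1 *m M))) (row_mx 0 (row_mx A2 (- G2)))),
  (row_mx b1 (row_mx b2 (c2 - c1 *m M))).
have link (xi1 : 'rV_ng1) (xi2 : 'rV_ng2) :
    (xi1 *m (G1 *m M) + xi2 *m - G2 == c2 - c1 *m M) =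
    ((xi1 *m G1 + c1) *m M == xi2 *m G2 + c2).
  by rewrite mulmxN mulmxDl -mulmxA -subr_eq0 -[RHS]subr_eq0 opprB opprD addrACA.
apply/seteqP; split=> z /=.
  move=> [[xi1 [B1 [E1 ->]]] [xi2 [B2 [E2 /eqP E3]]]].
  exists (row_mx xi1 xi2); split; first exact/unit_cube_row_mx.
  rewrite mul_row_col !mul_mx_row !mulmx0 add_row_mx addr0 add_row_mx add0r E1 E2.
  by rewrite -link in E3; rewrite (eqP E3) mul_row_col mulmx0 addr0.
move=> [xi [B [E ->]]]; rewrite -(hsubmxK xi) in B E *.
move: B E => /unit_cube_row_mx[B1 B2].
rewrite mul_row_col !mul_mx_row !mulmx0 add_row_mx addr0 add_row_mx add0r.
move=> /eq_row_mx[E1 /eq_row_mx[E2 E3]].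
rewrite mul_row_col mulmx0 addr0; split; first by exists (lsubmx xi).
by exists (rsubmx xi); do !split=> //; apply/eqP; rewrite -link E3.
Qed.

Lemma Zset_box m (em ep r : 'rV[R]_m) : (forall i, em 0 i <= r 0 i <= ep 0 i) ->
  Zset (diag_mx (2%:R^-1 *: (ep - em))) (2%:R^-1 *: (em + ep)) r.
Proof.
move=> r_box.
exists (\row_j (if ep 0 j == em 0 j then 0
               else (r 0 j - 2%:R^-1 * (em 0 j + ep 0 j)) / (2%:R^-1 * (ep 0 j - em 0 j)))).
have radius_gt0 j : ep 0 j != em 0 j -> 0 < 2%:R^-1 * (ep 0 j - em 0 j).
  move=> neq; have /andP[lo hi] := r_box j.
  by rewrite mulr_gt0 ?invr_gt0 ?ltr0n // subr_gt0 lt_neqAle eq_sym neq (le_trans lo hi).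
split; [|split].
- move=> j; rewrite mxE; case: eqP => [_|/eqP neq]; first by rewrite lerN10 ler01.
  have /andP[lo hi] := r_box j.
  by rewrite ler_pdivlMr ?ler_pdivrMr ?radius_gt0 //; apply/andP; split; lra.
- by rewrite mulmx0.
- apply/rowP => j; rewrite mul_mx_diag !mxE; case: eqP => [eq|/eqP neq].
    by have := r_box j; rewrite eq; lra.
  by rewrite divfK ?subrK // gt_eqF ?radius_gt0.
Qed.

End ConstrainedZonotope.

Section Linearization.
Context {R : realType}.

(* The difference quotient of [f] from [zb] towards [z] at any [h] in (0, 1)
   is bounded by [f z - f zb] by convexity on the segment; let [h] tend to 0+. *)
Lemma lin_approx_le_cw_convex {n m} {P : set 'rV[R]_n} {f : 'rV[R]_n -> 'rV[R]_m}
    {zb z} i :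
  convex_set P -> cw_convex_on P f -> differentiable f zb -> P zb -> P z ->
  lin_approx f zb z 0 i <= f z 0 i.
Proof.
move=> P_cvx f_cvx f_diff Pzb Pz; set v := z - zb.
pose quotient h := (h^-1 *: ((f \o shift zb) (h *: v) - f zb)) 0 i.
have quotient_cvg : quotient @ 0^'+ --> ('D_v f zb) 0 i.
  apply: (@cvg_trans _ (quotient @ 0^')).
    by apply: cvg_fmap2; apply: within_subset => x /= /gt_eqF ->.
  apply: (continuous_cvg _ (@coord_continuous _ _ _ _ _ _)); exact: diff_derivable.
have : ('D_v f zb) 0 i <= f z 0 i - f zb 0 i.
  apply: (cvgr_to_le quotient_cvg); near=> h.
  have h0 : 0 < h by near: h; exact: nbhs_right_gt.
  have h1 : h < 1 by near: h; exact: nbhs_right_lt.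
  have segE : h *: v + zb = h *: z + (1 - h) *: zb.
    by rewrite /v scalerBr scalerBl scale1r addrA addrAC.
  have := f_cvx i z zb h Pz Pzb; rewrite (ltW h0) (ltW h1) => /(_ isT) seg_cvx.
  by rewrite /quotient /= segE !mxE ler_pdivrMl //; lra.
by rewrite /lin_approx mxE -/v -deriveEjacobian //; lra.
Unshelve. all: by end_near.
Qed.

Definition affine_map {n m} (l : 'rV[R]_n -> 'rV[R]_m) :=
  forall x y t, l (t *: x + (1 - t) *: y) = t *: l x + (1 - t) *: l y.

Lemma lin_approx_affine {n m} (f : 'rV[R]_n -> 'rV[R]_m) zb :
  affine_map (lin_approx f zb).
Proof.
move=> x y t; apply/rowP => k; rewrite /lin_approx !mulmxBl !mulmxDl -!scalemxAl !mxE.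
ring.
Qed.

Lemma convex_fun_on_cw_sub_affine {n m} {P : set 'rV[R]_n} {f l1 l2 : 'rV[R]_n -> 'rV[R]_m} i :
  cw_convex_on P f -> affine_map l1 -> affine_map l2 ->
  convex_fun_on P (fun z => f z 0 i - l1 z 0 i - l2 z 0 i).
Proof.
move=> f_cvx l1_aff l2_aff x y t Px Py t01; rewrite l1_aff l2_aff !mxE.
have := f_cvx i x y t Px Py t01; lra.
Qed.

Lemma convex_fun_on_affine_sub_cw {n m} {P : set 'rV[R]_n} {f l1 l2 : 'rV[R]_n -> 'rV[R]_m} i :
  cw_convex_on P f -> affine_map l1 -> affine_map l2 ->
  convex_fun_on P (fun z => - (l1 z 0 i - f z 0 i - l2 z 0 i)).
Proof.
move=> f_cvx l1_aff l2_aff x y t Px Py t01; rewrite l1_aff l2_aff !mxE.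
have := f_cvx i x y t Px Py t01; lra.
Qed.

End Linearization.

Section LinearizationError.
Context {R : realType} {N m : nat}.
Context {S : seq 'rV[R]_N} {f fa fb l : 'rV[R]_N -> 'rV[R]_m} {zb : 'rV[R]_N}.
Hypotheses (f_dc : forall z, conv_hull S z -> f z = fa z - fb z)
  (fa_diff : differentiable fa zb) (fb_diff : differentiable fb zb)
  (fa_cvx : cw_convex_on (conv_hull S) fa) (fb_cvx : cw_convex_on (conv_hull S) fb)
  (S_zb : conv_hull S zb) (l_aff : affine_map l).

Lemma lin_error_ge i e :
  (forall z, is_vertex (conv_hull S) z -> e <= lin_approx fa zb z 0 i - fb z 0 i - l z 0 i) ->
  forall z, conv_hull S z -> e <= (f z - l z) 0 i.
Proof.
move=> e_vert z Sz.
have fa_tangent := lin_approx_le_cw_convex i (convex_conv_hull S) fa_cvx fa_diff S_zb Sz.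
have e_le : e <= lin_approx fa zb z 0 i - fb z 0 i - l z 0 i.
  rewrite -lerN2; apply: (conv_hull_le_vertices (- e)
    (convex_fun_on_affine_sub_cw i fb_cvx (lin_approx_affine fa zb) l_aff) _ z Sz).
  by move=> y /e_vert; rewrite lerN2.
by rewrite f_dc // !mxE; lra.
Qed.

Lemma lin_error_le i e :
  (forall z, is_vertex (conv_hull S) z -> fa z 0 i - lin_approx fb zb z 0 i - l z 0 i <= e) ->
  forall z, conv_hull S z -> (f z - l z) 0 i <= e.
Proof.
move=> e_vert z Sz.
have fb_tangent := lin_approx_le_cw_convex i (convex_conv_hull S) fb_cvx fb_diff S_zb Sz.
have /= e_ge := conv_hull_le_vertices e
  (convex_fun_on_cw_sub_affine i fa_cvx (lin_approx_affine fb zb) l_aff) e_vert z Sz.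
by rewrite f_dc // !mxE; lra.
Qed.

End LinearizationError.

Theorem theorem2 (R : realType) (n r m : nat)
  (X : set 'rV[R]_n) (V : set 'rV[R]_r) (y : 'rV[R]_m)
  (h : 'rV[R]_n -> 'rV[R]_r -> 'rV[R]_m)
  (rha rhb : 'rV[R]_(n + r) -> 'rV[R]_m)
  (S : seq 'rV[R]_(n + r)) (zb : 'rV[R]_(n + r))
  (em ep : 'rV[R]_m) :
  is_CZ X -> is_CZ V ->
  let rho := fun z : 'rV[R]_(n + r) => h (lsubmx z) (rsubmx z) in
  let P := conv_hull S in
  cprod X V `<=` P ->
  (forall z, P z -> rho z = rha z - rhb z) ->
  differentiable_on P rha -> differentiable_on P rhb ->
  cw_convex_on P rha -> cw_convex_on P rhb ->
  P zb ->
  let H := jacobian rho zb in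
  let Hx := usubmx H in
  let Hv := dsubmx H in
  let rbar := lin_approx rho zb in
  let rbara := lin_approx rha zb in
  let rbarb := lin_approx rhb zb in
  (forall i : 'I_m,
     (exists z, is_vertex P z /\ em 0 i = rbara z 0 i - rhb z 0 i - rbar z 0 i) /\
     (forall z, is_vertex P z -> em 0 i <= rbara z 0 i - rhb z 0 i - rbar z 0 i)) ->
  (forall i : 'I_m,
     (exists z, is_vertex P z /\ ep 0 i = rha z 0 i - rbarb z 0 i - rbar z 0 i) /\
     (forall z, is_vertex P z -> rha z 0 i - rbarb z 0 i - rbar z 0 i <= ep 0 i)) ->
  let Rk := Zset (diag_mx ((2%:R)^-1 *: (ep - em))) ((2%:R)^-1 *: (em + ep)) in
  let Y := msum (msum [set y - rho zb + zb *m H] (sneg (mx_img Hv V))) (sneg Rk) in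
  let Xb := ginter X Hx Y in
  [set x | X x /\ exists v, V v /\ y = h x v] `<=` Xb /\ is_CZ Xb.
Proof.
move=> X_CZ V_CZ rho P XV_P rho_dc rha_diff rhb_diff rha_cvx rhb_cvx P_zb.
move=> H Hx Hv rbar rbara rbarb em_min ep_max Rk Y Xb.
split; last first.
  apply: is_CZ_ginter => //; apply: is_CZ_msum; last exact/is_CZ_sneg/is_CZ_Zset.
  by apply: is_CZ_msum; [exact: is_CZ_set1 | exact/is_CZ_sneg/is_CZ_mx_img].
move=> x [Xx [v [Vv yE]]]; set z := row_mx x v.
have P_z : P z by apply: XV_P; rewrite /cprod /= row_mxKl row_mxKr.
have rho_z : rho z = y by rewrite /rho row_mxKl row_mxKr yE.
have err_box : Rk (rho z - rbar z).
  have err_ge := lin_error_ge rho_dc (rha_diff _ P_zb) rha_cvx rhb_cvx P_zb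
    (lin_approx_affine rho zb).
  have err_le := lin_error_le rho_dc (rhb_diff _ P_zb) rha_cvx rhb_cvx P_zb
    (lin_approx_affine rho zb).
  apply: Zset_box => i; apply/andP; split.
  - by apply: err_ge P_z => w /(proj2 (em_min i)).
  - by apply: err_le P_z => w /(proj2 (ep_max i)).
split=> //.
exists (y - rho zb + zb *m H - v *m Hv).
  exists (y - rho zb + zb *m H) => //.
  by exists (- (v *m Hv)) => //; exists (v *m Hv) => //; exists v.
exists (- (rho z - rbar z)); first by exists (rho z - rbar z).
have zH : z *m H = x *m Hx + v *m Hv by rewrite -{1}(vsubmxK H) mul_row_col.
rewrite rho_z /rbar /lin_approx mulmxBl zH -/(rho zb).
move: (x *m Hx) (v *m Hv) (zb *m H) (rho zb) => A B C D.
by apply/rowP => k; rewrite !mxE; ring.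
Qed.
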